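(* Let $G=(V,E)$ be a finite connected simple graph with adjacency matrix $A$, let $W\subseteq V$ be a nonempty set of marked vertices, let $\gamma>0$, and let $H=-\gamma A-\sum_{w\in W}|w\rangle\langle w|$ on $\mathcal{H}=\mathbb{C}^V$. Let $\phi_0$ be the largest eigenvalue of $A$ and $|\phi_0\rangle$ a normalized eigenvector of $A$ for $\phi_0$. Let $\lambda^-$ be the smallest eigenvalue of $H$ and $|\lambda^-\rangle$ an associated eigenvector. Then $\lambda^-$ is a simple eigenvalue of $H$, $\langle\lambda^-|\phi_0\rangle\neq0$, and $\lambda^-<-\gamma\phi_0$.
   Context: $\{|v\rangle: v\in V\}$ is the computational basis of $\mathcal{H}$. Since $G$ is connected, $\phi_0$ is a simple eigenvalue of $A$. *)

From HB Require Import structures.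
From mathcomp Require Import all_boot all_order all_algebra.
Set Implicit Arguments. Unset Strict Implicit. Unset Printing Implicit Defensive.
Import Order.TTheory GRing.Theory Num.Theory.
Local Open Scope ring_scope.

Definition simple_graph n (adj : rel 'I_n) : Prop :=
  symmetric adj /\ irreflexive adj.

Definition connected_graph n (adj : rel 'I_n) : Prop :=
  forall i j : 'I_n, connect adj i j.

Definition adjmx (C : numClosedFieldType) n (adj : rel 'I_n) : 'M[C]_n :=
  \matrix_(i, j) (adj i j)%:R.

Definition search_ham (C : numClosedFieldType) n (adj : rel 'I_n)
    (W : {set 'I_n}) (gamma : C) : 'M[C]_n :=
  - (gamma *: adjmx C adj) - \sum_(w in W) delta_mx w w.

(* vectors of C^n are row vectors 'rV_n; <u|v> = sum_i conj(u_i) v_i *)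
Definition braket (C : numClosedFieldType) n (u v : 'rV[C]_n) : C :=
  \sum_(i < n) (u 0 i)^* * v 0 i.

Definition simple_eigenvalue (F : fieldType) n (M : 'M[F]_n) (a : F) : bool :=
  eigenvalue M a && ~~ (('X - a%:P) ^+ 2 %| char_poly M).

From HB Require Import structures.
From mathcomp Require Import all_boot all_order all_algebra ring.
Set Implicit Arguments. Unset Strict Implicit. Unset Printing Implicit Defensive.
Import Order.TTheory GRing.Theory Num.Theory.
Local Open Scope ring_scope.
Local Open Scope sesquilinear_scope.

(** The matrix [M = - H = gamma A + \sum_(w in W) |w><w|] is Hermitian,
   entrywise nonnegative and positive on the edges of the connected graph, and
   [- lam] is its largest eigenvalue.  Perron-Frobenius for such matrices
   follows from the Rayleigh quotient: if [v] is a top eigenvector, the vector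
   [|v|] of moduli has at least the same Rayleigh quotient, so it is a top
   eigenvector as well, and connectivity forces all its entries to be nonzero.
   Hence top eigenvectors have no zero entry, the top eigenspace is a line
   (so [lam] is simple, [H] being Hermitian), and every top eigenvector is a
   phase times a positive vector.  The same holds for [A] and [phi0v], so
   [<lam|phi0>] is a nonzero multiple of a sum of positive terms.  Finally
   the Rayleigh quotient of [M] at [phi0v] is
   [gamma phi0 + \sum_(w in W) |phi0v w|^2 > gamma phi0]. *)

Lemma char_poly_similar (F : fieldType) n (P D : 'M[F]_n) : P \in unitmx ->
  char_poly (invmx P *m D *m P) = char_poly D.
Proof.
move=> Pu; rewrite /char_poly /char_poly_mx !map_mxM.
set iP := map_mx polyC (invmx P); set P' := map_mx polyC P.
have iPP : iP *m P' = 1%:M by rewrite -map_mxM mulVmx // map_mx1.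
have PiP : P' *m iP = 1%:M by rewrite -map_mxM mulmxV // map_mx1.
have eX : ('X%:M : 'M[{poly F}]_n) = iP *m 'X%:M *m P'.
  by rewrite mul_mx_scalar -scalemxAl iPP scalemx1.
rewrite eX -mulmxBl -mulmxBr !det_mulmx -eX mulrC mulrA -det_mulmx PiP.
by rewrite det1 mul1r.
Qed.

Lemma eigenvalueN (F : fieldType) n (A : 'M[F]_n) a :
  eigenvalue (- A) (- a) = eigenvalue A a.
Proof.
apply/eigenvalueP/eigenvalueP => -[v ev vn0]; exists v => //.
  by apply: oppr_inj; rewrite -mulmxN ev scaleNr.
by rewrite mulmxN ev scaleNr.
Qed.

Lemma eigenvalueN_le (F : numFieldType) n (A : 'M[F]_n) m :
  (forall a, eigenvalue A a -> m <= a) -> forall a, eigenvalue (- A) a -> a <= - m.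
Proof. by move=> m_min a; rewrite -[a]opprK eigenvalueN lerNr opprK => /m_min. Qed.

Lemma hermsymmxN (C : numClosedFieldType) n (H : 'M[C]_n) :
  H \is hermsymmx -> - H \is hermsymmx.
Proof.
move=> /is_hermitianmxP hermH; apply/is_hermitianmxP.
by rewrite {1}hermH linearN /= map_mxN scalerN.
Qed.

Section DotProduct.
Variables (C : numClosedFieldType) (n : nat).
Implicit Types (u v : 'rV[C]_n).

Lemma dotmx_sumE u v : dotmx u v = \sum_i u 0 i * (v 0 i)^*.
Proof. by rewrite dotmxE mxE; apply: eq_bigr => i _; rewrite !mxE. Qed.

Lemma braketE u v : braket u v = dotmx v u.
Proof. by rewrite dotmx_sumE; apply: eq_bigr => i _; rewrite mulrC. Qed.

Lemma dotmxZl a u v : dotmx (a *: u) v = a * dotmx u v.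
Proof. by rewrite !dotmxE -scalemxAl mxE. Qed.

Lemma dotmx_unit_neq0 v : dotmx v v = 1 -> v != 0.
Proof. by apply: contra_eq_neq => ->; rewrite linear0l eq_sym oner_eq0. Qed.

Lemma dotmx_unitary (P : 'M[C]_n) u v : P \is unitarymx ->
  dotmx (u *m P) (v *m P) = dotmx u v.
Proof.
move=> /unitarymxP PPt.
by rewrite !dotmxE trmx_mul map_mxM mulmxA -(mulmxA u) PPt mulmx1.
Qed.

Lemma dotmx_diag (d : 'rV[C]_n) v :
  dotmx (v *m diag_mx d) v = \sum_i d 0 i * (v 0 i * (v 0 i)^*).
Proof.
by rewrite dotmx_sumE mul_mx_diag; apply: eq_bigr => i _; rewrite mxE mulrCA mulrA.
Qed.

Lemma dotmx_mulmx_sumE (A : 'M[C]_n) u v :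
  dotmx (u *m A) v = \sum_i \sum_j u 0 i * A i j * (v 0 j)^*.
Proof.
rewrite dotmx_sumE exchange_big; apply: eq_bigr => j _.
by rewrite mxE mulr_suml.
Qed.

Lemma dotmx_norm v :
  dotmx (map_mx Num.norm v) (map_mx Num.norm v) = dotmx v v.
Proof.
rewrite !dotmx_sumE; apply: eq_bigr => i _.
by rewrite mxE geC0_conj ?normr_ge0 // -expr2 normCK.
Qed.

Lemma map_norm_rV_eq0 v : (map_mx Num.norm v == 0) = (v == 0).
Proof.
apply/eqP/eqP => [/rowP v0|->]; last by apply/rowP => i; rewrite !mxE normr0.
by apply/rowP => i; have := v0 i; rewrite !mxE => /normr0_eq0.
Qed.

Lemma dotmx_phase_neq0 a b u v i : a != 0 -> b != 0 ->
  u 0 i != 0 -> v 0 i != 0 ->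
  dotmx (a *: map_mx Num.norm u) (b *: map_mx Num.norm v) != 0.
Proof.
move=> a0 b0 ui0 vi0.
rewrite dotmx_sumE (eq_bigr (fun k => a * b^* * (`|u 0 k| * `|v 0 k|))); last first.
  move=> k _; rewrite !mxE rmorphM /= (geC0_conj (normr_ge0 _)).
  by rewrite mulrACA.
rewrite -mulr_sumr !mulf_neq0 ?conjC_eq0 // (bigD1 i) //= lt0r_neq0 //.
rewrite ltr_pwDl ?mulr_gt0 ?normr_gt0 // sumr_ge0 // => k _.
by rewrite mulr_ge0 ?normr_ge0.
Qed.

End DotProduct.

Section Hermitian.
Variables (C : numClosedFieldType) (n : nat) (M : 'M[C]_n).
Hypothesis hermM : M \is hermsymmx.
Let P := spectralmx M.
Let d := spectral_diag M.

Let P_unitary : P \is unitarymx := spectral_unitarymx M.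

Lemma hermsymmx_entryC i j : M j i = (M i j)^*.
Proof.
have /matrixP/(_ j i) := is_hermitianmxP _ _ _ hermM.
by rewrite expr0 scale1r !mxE.
Qed.

Lemma hermitian_spectral_decomposition : M = P^t* *m diag_mx d *m P.
Proof.
rewrite -invmx_unitary //; exact/orthomx_spectralP/hermitian_normalmx.
Qed.

Lemma char_poly_hermitian : char_poly M = \prod_(i < n) ('X - (d 0 i)%:P).
Proof.
rewrite {1}hermitian_spectral_decomposition -invmx_unitary //.
rewrite char_poly_similar ?spectral_unit // char_poly_trig ?diag_mx_is_trig //.
by apply: eq_bigr => i _; rewrite mxE eqxx mulr1n.
Qed.

Lemma eigenvalue_hermitian a : eigenvalue M a <-> exists i, a = d 0 i.
Proof.
rewrite eigenvalue_root_char char_poly_hermitian.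
rewrite -(big_map (fun i => d 0 i) xpredT (fun a => 'X - a%:P)) root_prod_XsubC.
by split=> [/mapP [i _ ->]|[i ->]]; [exists i | apply: map_f; rewrite mem_index_enum].
Qed.

Lemma hermitian_eigenvalue_real a : eigenvalue M a -> a \is Num.real.
Proof.
move=> /eigenvalue_hermitian [i ->].
by have /mxOverP := hermitian_spectral_diag_real hermM; apply.
Qed.

Lemma dotmx_hermitian_spectral y :
  dotmx (y *m P *m M) (y *m P) = dotmx (y *m diag_mx d) y.
Proof.
rewrite [in X in _ *m X]hermitian_spectral_decomposition !mulmxA mulmxtVK //.
by rewrite dotmx_unitary.
Qed.

Lemma rayleigh_le mu : (forall a, eigenvalue M a -> a <= mu) ->
  forall x, dotmx (x *m M) x <= mu * dotmx x x.
Proof.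
move=> mu_max x; rewrite -(mulmxKtV x P_unitary) // dotmx_hermitian_spectral.
rewrite dotmx_unitary // dotmx_diag dotmx_sumE mulr_sumr.
apply: ler_sum => j _; rewrite ler_wpM2r ?mul_conjC_ge0 //.
by apply: mu_max; apply/eigenvalue_hermitian; exists j.
Qed.

Lemma rayleigh_eq_eigenvector mu : (forall a, eigenvalue M a -> a <= mu) ->
  forall x, dotmx (x *m M) x = mu * dotmx x x -> x *m M = mu *: x.
Proof.
move=> mu_max x; rewrite -(mulmxKtV x P_unitary) // dotmx_hermitian_spectral.
set y := x *m P^t*; rewrite dotmx_unitary // dotmx_diag dotmx_sumE mulr_sumr.
move/eqP; rewrite eq_sym -subr_eq0 -sumrB => /eqP sum0.
have gap0 j : (mu - d 0 j) * (y 0 j * (y 0 j)^* ) = 0.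
  rewrite mulrBl; apply: (psumr_eq0P _ sum0) => // i _.
  rewrite -mulrBl mulr_ge0 ?mul_conjC_ge0 // subr_ge0.
  by apply: mu_max; apply/eigenvalue_hermitian; exists i.
have ey : y *m diag_mx d = mu *: y.
  apply/rowP => j; rewrite mul_mx_diag mxE [RHS]mxE.
  move/eqP: (gap0 j); rewrite mulf_eq0 mul_conjC_eq0 subr_eq0.
  by case/orP => /eqP ->; rewrite ?mul0r ?mulr0 // mulrC.
rewrite [in X in _ *m X]hermitian_spectral_decomposition !mulmxA mulmxtVK //.
by rewrite ey -scalemxAl.
Qed.

Lemma hermitian_simple_eigenvalue a : eigenvalue M a ->
  (forall v w : 'rV_n, v != 0 -> v *m M = a *: v -> w *m M = a *: w ->
     exists c, w = c *: v) ->
  simple_eigenvalue M a.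
Proof.
(* A double root yields two orthonormal rows of the unitary diagonalizer
   lying in the same eigenspace, which cannot be collinear. *)
move=> eig_a collinear; rewrite /simple_eigenvalue eig_a /=; apply/negP.
have /eigenvalue_hermitian [i ai] := eig_a; subst a.
rewrite char_poly_hermitian (bigD1 i) //= expr2 dvdp_mul2l ?polyXsubC_eq0 //.
rewrite dvdp_XsubCl /root horner_prod => /prodf_eq0 [k ki].
rewrite hornerXsubC subr_eq0 => /eqP dik.
have /row_unitarymxP orthoP := P_unitary.
have row_eigen j : row j P *m M = d 0 j *: row j P.
  rewrite -row_mul {1}hermitian_spectral_decomposition !mulmxA.
  rewrite (unitarymxP P_unitary) mul1mx mul_diag_mx.
  by apply/rowP => l; rewrite !mxE.
have rowi_neq0 : row i P != 0 by apply: dotmx_unit_neq0; rewrite orthoP eqxx.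
have [|c rowk] := collinear (row i P) (row k P) rowi_neq0 (row_eigen i).
  by rewrite dik row_eigen.
move: (orthoP k i) (orthoP k k); rewrite (negbTE ki) eqxx rowk !dotmxZl orthoP.
by rewrite eqxx mulr1 => ->; rewrite !mul0r => /eqP; rewrite eq_sym oner_eq0.
Qed.

End Hermitian.

Section PerronFrobenius.
Variables (C : numClosedFieldType) (n : nat) (M : 'M[C]_n) (adj : rel 'I_n).
Hypotheses (hermM : M \is hermsymmx) (M_ge0 : forall i j, 0 <= M i j)
  (M_gt0 : forall i j, adj i j -> 0 < M i j)
  (adj_connected : forall i j, connect adj i j).

Lemma nonneg_eigenvector_entries_neq0 mu (u : 'rV[C]_n) :
  (forall i, 0 <= u 0 i) -> u != 0 -> u *m M = mu *: u -> forall i, u 0 i != 0.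
Proof.
move=> u_ge0 /rV0Pn [i0 ui0] eu i.
have col0 j : u 0 j = 0 -> forall k, u 0 k * M k j = 0.
  move=> uj0 k; have : (u *m M) 0 j = 0 by rewrite eu mxE uj0 mulr0.
  rewrite mxE => /psumr_eq0P; apply=> // l _.
  by rewrite mulr_ge0.
have edge0 j k : adj j k -> u 0 j = 0 -> u 0 k = 0.
  move=> jk uj0; have /eqP := col0 j uj0 k.
  rewrite mulf_eq0 hermsymmx_entryC // conjC_eq0 (gt_eqF (M_gt0 jk)) orbF.
  by move/eqP.
have zero_closed : closed adj [pred k | u 0 k == 0].
  move=> j k jk; rewrite !inE; apply/eqP/eqP; first exact: edge0.
  move=> uk0; have /eqP := col0 k uk0 j.
  by rewrite mulf_eq0 (gt_eqF (M_gt0 jk)) orbF => /eqP.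
have := closed_connect zero_closed (adj_connected i i0).
by rewrite !inE (negbTE ui0) => ->.
Qed.

Variable mu : C.
Hypothesis mu_max : forall a, eigenvalue M a -> a <= mu.

Lemma top_eigenvector_norm (v : 'rV[C]_n) : v != 0 -> v *m M = mu *: v ->
  map_mx Num.norm v *m M = mu *: map_mx Num.norm v.
Proof.
move=> vn0 ev; apply: (rayleigh_eq_eigenvector hermM mu_max).
apply/le_anti; rewrite rayleigh_le //= dotmx_norm.
have eig_mu : eigenvalue M mu by apply/eigenvalueP; exists v.
have <- : dotmx (v *m M) v = mu * dotmx v v by rewrite ev dotmxZl.
have quad_real : dotmx (v *m M) v \is Num.real.
  rewrite ev dotmxZl realM ?(hermitian_eigenvalue_real hermM eig_mu) //.
  by rewrite ger0_real ?dnorm_ge0.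
apply: le_trans (real_ler_norm quad_real) _.
rewrite !dotmx_mulmx_sumE; apply: le_trans (ler_norm_sum _ _ _) _.
apply: ler_sum => i _; apply: le_trans (ler_norm_sum _ _ _) _.
apply: ler_sum => j _.
by rewrite !mxE !normrM norm_conjC geC0_conj ?normr_ge0 // (ger0_norm (M_ge0 i j)).
Qed.

Lemma top_eigenvector_entries_neq0 (v : 'rV[C]_n) : v != 0 -> v *m M = mu *: v ->
  forall i, v 0 i != 0.
Proof.
move=> vn0 ev i.
have normv_ge0 j : 0 <= map_mx Num.norm v 0 j by rewrite mxE normr_ge0.
have normv0 : map_mx Num.norm v != 0 by rewrite map_norm_rV_eq0.
have := nonneg_eigenvector_entries_neq0 normv_ge0 normv0 (top_eigenvector_norm vn0 ev) i.
by rewrite mxE normr_eq0.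
Qed.

Lemma top_eigenvectors_collinear (v w : 'rV[C]_n) :
  v != 0 -> v *m M = mu *: v -> w *m M = mu *: w -> exists c, w = c *: v.
Proof.
move=> vn0 ev ew; have /rV0Pn [i vi0] := vn0.
exists (w 0 i / v 0 i); set c := _ / _.
have ez : (w - c *: v) *m M = mu *: (w - c *: v).
  by rewrite mulmxBl -scalemxAl ev ew scalerBr !scalerA mulrC.
apply/eqP; rewrite -subr_eq0; apply: contraLR isT => zn0.
by have := top_eigenvector_entries_neq0 zn0 ez i; rewrite !mxE divfK ?subrr ?eqxx.
Qed.

Lemma top_eigenvector_phase (v : 'rV[C]_n) : v != 0 -> v *m M = mu *: v ->
  exists2 c, c != 0 & v = c *: map_mx Num.norm v.
Proof.
move=> vn0 ev; have normv0 : map_mx Num.norm v != 0 by rewrite map_norm_rV_eq0.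
have [c vE] := top_eigenvectors_collinear normv0 (top_eigenvector_norm vn0 ev) ev.
by exists c => //; apply: contraNneq vn0 => c0; rewrite vE c0 scale0r.
Qed.

End PerronFrobenius.

Section SearchHamiltonian.
Variables (C : numClosedFieldType) (n : nat) (adj : rel 'I_n) (W : {set 'I_n}).
Variable gamma : C.
Hypotheses (adj_sym : symmetric adj) (gamma_gt0 : 0 < gamma).
Local Notation A := (adjmx C adj).
Local Notation M := (- search_ham adj W gamma).

Lemma adjmx_ge0 i j : 0 <= A i j.
Proof. by rewrite mxE ler0n. Qed.

Lemma adjmx_gt0 i j : adj i j -> 0 < A i j.
Proof. by rewrite mxE => ->; rewrite ltr01. Qed.

Lemma adjmx_hermitian : A \is hermsymmx.
Proof.
apply: realsym_hermsym.
  by apply/is_hermitianmxP; apply/matrixP => i j; rewrite !mxE expr0 mul1r adj_sym.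
by apply/mxOverP => i j; rewrite ger0_real ?adjmx_ge0.
Qed.

Lemma opp_search_hamE i j :
  M i j = gamma * (adj i j)%:R + ((i == j) && (i \in W))%:R.
Proof.
rewrite /search_ham opprB opprK !mxE summxE addrC; congr (_ + _).
rewrite big_mkcond /= (bigD1 i) //= big1 => [|k ki]; last first.
  by rewrite mxE eq_sym (negbTE ki); case: ifP.
by case: (i \in W); rewrite ?mxE ?eqxx addr0 ?andbT ?andbF //= eq_sym.
Qed.

Lemma opp_search_ham_ge0 i j : 0 <= M i j.
Proof. by rewrite opp_search_hamE addr_ge0 ?mulr_ge0 ?ler0n ?ltW. Qed.

Lemma opp_search_ham_gt0 i j : adj i j -> 0 < M i j.
Proof. by rewrite opp_search_hamE => ->; rewrite mulr1 ltr_pwDl ?ler0n. Qed.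

Lemma opp_search_ham_hermitian : M \is hermsymmx.
Proof.
apply: realsym_hermsym.
  apply/is_hermitianmxP; apply/matrixP => i j.
  rewrite expr0 scale1r [RHS]mxE [RHS]mxE /= !opp_search_hamE adj_sym eq_sym.
  by case: eqP => // ->.
by apply/mxOverP => i j; rewrite ger0_real ?opp_search_ham_ge0.
Qed.

Lemma dotmx_opp_search_ham x :
  dotmx (x *m M) x = gamma * dotmx (x *m A) x + \sum_(w in W) x 0 w * (x 0 w)^*.
Proof.
rewrite !dotmx_mulmx_sumE mulr_sumr [\sum_(w in W) _]big_mkcond -big_split /=.
apply: eq_bigr => i _; rewrite mulr_sumr (bigD1 i) //= [in RHS](bigD1 i) //=.
rewrite opp_search_hamE [in RHS]mxE eqxx andTb.
rewrite (eq_bigr (fun j => gamma * (x 0 i * A i j * (x 0 j)^* ))) => [|j ji]; last first.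
  by rewrite opp_search_hamE eq_sym (negbTE ji) addr0 mxE; ring.
by case: (i \in W) => /=; ring.
Qed.

Hypothesis adj_connected : forall i j, connect adj i j.
Variables (lam phi0 : C).
Hypotheses (lam_min : forall a, eigenvalue (search_ham adj W gamma) a -> lam <= a)
  (phi0_max : forall a, eigenvalue A a -> a <= phi0).

Let M_max : forall a, eigenvalue M a -> a <= - lam := eigenvalueN_le lam_min.

Let ground_opp (v : 'rV_n) :
  v *m search_ham adj W gamma = lam *: v -> v *m M = - lam *: v.
Proof. by rewrite mulmxN scaleNr => ->. Qed.

Let adjmx_top_entries_neq0 := top_eigenvector_entries_neq0 adjmx_hermitian
  adjmx_ge0 adjmx_gt0 adj_connected phi0_max.

Lemma search_ham_ground_simple :
  eigenvalue (search_ham adj W gamma) lam ->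
  simple_eigenvalue (search_ham adj W gamma) lam.
Proof.
move=> eig_lam; apply: hermitian_simple_eigenvalue eig_lam _.
  by rewrite -[search_ham _ _ _]opprK hermsymmxN ?opp_search_ham_hermitian.
move=> v w v0 ev ew.
exact: (top_eigenvectors_collinear opp_search_ham_hermitian opp_search_ham_ge0
  opp_search_ham_gt0 adj_connected M_max v0 (ground_opp ev) (ground_opp ew)).
Qed.

Lemma search_ham_ground_overlap (lamv phi0v : 'rV[C]_n) :
  lamv != 0 -> lamv *m search_ham adj W gamma = lam *: lamv ->
  phi0v != 0 -> phi0v *m A = phi0 *: phi0v -> dotmx phi0v lamv != 0.
Proof.
move=> lamv0 elam phi0v0 ephi.
have [c1 c1_neq0 ->] := top_eigenvector_phase opp_search_ham_hermitian
  opp_search_ham_ge0 opp_search_ham_gt0 adj_connected M_max lamv0 (ground_opp elam).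
have [c2 c2_neq0 ->] := top_eigenvector_phase adjmx_hermitian adjmx_ge0 adjmx_gt0
  adj_connected phi0_max phi0v0 ephi.
have /rV0Pn [i lamv_i] := lamv0.
exact: dotmx_phase_neq0 c2_neq0 c1_neq0 (adjmx_top_entries_neq0 phi0v0 ephi i) lamv_i.
Qed.

Lemma search_ham_ground_lt (phi0v : 'rV[C]_n) : W != set0 ->
  dotmx phi0v phi0v = 1 -> phi0v *m A = phi0 *: phi0v -> lam < - gamma * phi0.
Proof.
move=> /set0Pn [w0 w0W] phi_norm ephi.
have phi0v0 := dotmx_unit_neq0 phi_norm.
have := rayleigh_le opp_search_ham_hermitian M_max phi0v.
rewrite dotmx_opp_search_ham ephi dotmxZl phi_norm !mulr1 mulNr ltrNr.
apply: lt_le_trans; rewrite ltrDl (bigD1 w0) //; apply: ltr_pwDl.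
- by rewrite mul_conjC_gt0 (adjmx_top_entries_neq0 phi0v0 ephi).
- by rewrite sumr_ge0 // => w _; rewrite mul_conjC_ge0.
Qed.

End SearchHamiltonian.

Theorem proposition3 (C : numClosedFieldType) (n : nat) (adj : rel 'I_n)
  (W : {set 'I_n}) (gamma phi0 lam : C) (phi0v lamv : 'rV[C]_n) :
  simple_graph adj -> connected_graph adj ->
  W != set0 -> 0 < gamma ->
  (* phi0 is the largest eigenvalue of A, with normalized eigenvector phi0v *)
  eigenvalue (adjmx C adj) phi0 ->
  (forall a, eigenvalue (adjmx C adj) a -> a <= phi0) ->
  phi0v *m adjmx C adj = phi0 *: phi0v -> braket phi0v phi0v = 1 ->
  (* lam is the smallest eigenvalue of H, with eigenvector lamv *)
  eigenvalue (search_ham adj W gamma) lam ->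
  (forall a, eigenvalue (search_ham adj W gamma) a -> lam <= a) ->
  lamv != 0 -> lamv *m search_ham adj W gamma = lam *: lamv ->
  [/\ simple_eigenvalue (search_ham adj W gamma) lam,
      braket lamv phi0v != 0 &
      lam < - gamma * phi0].
Proof.
move=> [adj_sym _] adj_conn W0 gamma_gt0 _ phi0_max ephi phi_norm.
move=> eig_lam lam_min lamv0 elam.
rewrite !braketE in phi_norm *.
have phi0v0 := dotmx_unit_neq0 phi_norm.
split.
- exact: (search_ham_ground_simple adj_sym gamma_gt0 adj_conn lam_min eig_lam).
- exact: (search_ham_ground_overlap adj_sym gamma_gt0 adj_conn lam_min phi0_max
    lamv0 elam phi0v0 ephi).
- exact: (search_ham_ground_lt adj_sym gamma_gt0 adj_conn lam_min phi0_max
    W0 phi_norm ephi).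
Qed.
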